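(* For every positive integer $n\notin\{1,2,4\}$, $A'(n,4,3)=A(n,4,3)$. Moreover, $A'(1,4,3)=A'(2,4,3)=1$ and $A'(4,4,3)=2$.
   Context: For ${\sf u},{\sf v}\in\mathbb{F}_2^n$, $\Delta({\sf u},{\sf v})$ is the Hamming distance and ${\rm wt}({\sf u})$ the Hamming weight. $A'(n,d,e)$ denotes the maximum size of a nonempty set $S\subseteq \mathbb{F}_2^n$ such that ${\rm wt}({\sf u})\le e$ for all ${\sf u}\in S$ and $\Delta({\sf u},{\sf v})\ge d$ for all distinct ${\sf u},{\sf v}\in S$. $A(n,d,e)$ denotes the maximum size of a set $S\subseteq\mathbb{F}_2^n$ all of whose elements have weight exactly $e$ and with pairwise distances at least $d$ (the maximum size of a constant-weight code). It is known that $A(n,4,3)=\left\lfloor \frac{n}{3} \left\lfloor \frac{n-1}{2} \right\rfloor \right\rfloor-1$ if $n\equiv 5 \pmod 6$ and $A(n,4,3)=\left\lfloor \frac{n}{3} \left\lfloor \frac{n-1}{2} \right\rfloor \right\rfloor$ otherwise. *)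

From mathcomp Require Import all_boot.
Set Implicit Arguments. Unset Strict Implicit. Unset Printing Implicit Defensive.

Definition word (n : nat) := {ffun 'I_n -> bool}.

Definition wt n (u : word n) : nat := #|[set i | u i]|.
Definition hdist n (u v : word n) : nat := #|[set i | u i != v i]|.

Definition min_dist_ge n (d : nat) (S : {set word n}) : bool :=
  [forall u in S, forall v in S, (u != v) ==> (d <= hdist u v)].

Definition Aprime (n d e : nat) : nat :=
  \max_(S : {set word n} | (S != set0) && [forall u in S, wt u <= e] && min_dist_ge d S)
     #|S|.

Definition Acw (n d e : nat) : nat :=
  \max_(S : {set word n} | [forall u in S, wt u == e] && min_dist_ge d S) #|S|.

From mathcomp Require Import all_boot zify.
Set Implicit Arguments. Unset Strict Implicit. Unset Printing Implicit Defensive.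

(* Identify a word with its support. A code with weights at most 3 and minimum
   distance 4 becomes a family C of sets of size at most 3 with
   |A| + |B| - 2|A n B| >= 4, and a constant-weight-3 code is a family of
   triples meeting pairwise in at most one point. The family C is turned into
   such a triple packing of at least the same size by cases on its smallest
   block:
   - the empty set: then it is the only block, and one triple does;
   - a singleton {s}: all other blocks are triples avoiding s. If some pair
     {x, y} avoiding s lies in no block, replace {s} by {s, x, y}; otherwise
     the blocks cover all pairs of points other than s, and the four blocks
     {s}, B1, B2, B3 through a well chosen configuration of seven points are
     exchanged for four new triples (this needs at least five points);
   - a pair: the pairs are disjoint from each other and from all other blocks.
     If some point c lies in no pair, add c to every pair; otherwise the pairs
     partition the points, and we add a point a of one pair {a, b} to every
     other pair and replace {a, b} by a triple through b and two other pairs;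
   - only triples: C already is a triple packing.
   For n < 4 no two words are at distance 4, and for n = 4 three words cannot
   be pairwise at distance 4. *)

(* Each inequality between points must follow from an inequality hypothesis or
   from a set containing one of the points but not the other. *)
Ltac distinct_by_membership :=
  rewrite /= ?inE ?negb_or; repeat (apply/andP; split);
  first [ done
        | apply/eqP => eq_ab; subst;
          match goal with
          | H : is_true (?a != ?a) |- _ => by rewrite eqxx in H
          | H : is_true (?a \in ?X), H' : is_true (?a \notin ?X) |- _ => by rewrite H in H'
          end ].

Section FinsetFacts.
Variable T : finType.
Implicit Types (a b c d : T) (A B : {set T}).

Lemma cards3 a b c : a != b -> a != c -> b != c -> #|[set a; b; c]| = 3.
Proof.
move=> ab ac bc; rewrite setUC cardsU1 cardsU1 cards1 !inE.
by rewrite (eq_sym c a) (eq_sym c b) (negbTE ac) (negbTE bc) ab.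
Qed.

Lemma cards4 a b c d : a != b -> a != c -> a != d -> b != c -> b != d -> c != d ->
  #|[set a; b; c; d]| = 4.
Proof.
move=> ab ac ad bc bd cd; rewrite setUC cardsU1 cards3 // !inE.
by rewrite (eq_sym d a) (eq_sym d b) (eq_sym d c) (negbTE ad) (negbTE bd) (negbTE cd).
Qed.

Lemma card_set4_le a b c d : #|[set a; b; c; d]| <= 4.
Proof.
rewrite (@eq_card _ _ (mem [:: a; b; c; d])) ?card_size // => u.
by rewrite !inE !orbA.
Qed.

Lemma card_le_setD A B : #|A| <= #|A :\: B| + #|B|.
Proof.
by rewrite -(cardsID B A) addnC leq_add2l subset_leq_card // subsetIr.
Qed.

Lemma card_setI_le1 A B :
  (forall u v, u \in A -> u \in B -> v \in A -> v \in B -> u = v) -> #|A :&: B| <= 1.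
Proof.
move=> AB; apply/card_le1_eqP => u v; rewrite !inE => /andP[uA uB] /andP[vA vB].
exact: AB.
Qed.

Lemma neq_card_setI_lt A B : #|A :&: B| < #|A| -> A != B.
Proof. by apply: contraTneq => ->; rewrite setIid ltnn. Qed.

Lemma exists_notin A : #|A| < #|T| -> exists u, u \notin A.
Proof.
rewrite -cardsT => AT; have /properP[_ [u _ uA]] : A \proper setT.
  by rewrite properEcard subsetT.
by exists u.
Qed.

Lemma third_point a b B : #|B| = 3 -> exists w, [/\ w \in B, w != a & w != b].
Proof.
move=> B3; have : 0 < #|B :\: [set a; b]|.
  rewrite cardsD B3; have := subset_leq_card (subsetIr B [set a; b]).
  rewrite cards2; case: (a != b); lia.
by case/card_gt0P=> w; rewrite !inE negb_or => /andP[/andP[wa wb] wB]; exists w.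
Qed.

End FinsetFacts.

Section TriplePackings.
Variable T : finType.
Implicit Types (A B : {set T}) (F G : {set {set T}}).

Definition set_dist A B := #|A| + #|B| - 2 * #|A :&: B|.

Definition packing F := {in F &, forall A B, A != B -> #|A :&: B| <= 1}.

Definition triple_packing F := {in F, forall A, #|A| = 3} /\ packing F.

Definition has_triple_packing (m : nat) := exists2 F, triple_packing F & m <= #|F|.

Lemma packing_eq F A B u v : packing F -> A \in F -> B \in F -> u != v ->
  u \in A -> v \in A -> u \in B -> v \in B -> A = B.
Proof.
move=> pF AF BF uv uA vA uB vB; apply/eqP/negPn/negP => AB.
have := pF _ _ AF BF AB; apply/negP; rewrite -ltnNge.
by apply/card_gt1P; exists u, v; rewrite !inE uA vA uB vB.
Qed.

Lemma triple_packingS F G : F \subset G -> triple_packing G -> triple_packing F.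
Proof.
move=> /subsetP FG [G3 pG]; split=> [A /FG/G3 // | A B /FG AG /FG BG].
exact: pG.
Qed.

Lemma triple_packing1 A : #|A| = 3 -> triple_packing [set A].
Proof.
by move=> A3; split=> [B | B C]; rewrite !inE => /eqP-> //= /eqP->; rewrite eqxx.
Qed.

Lemma triple_packingU F G : triple_packing F -> triple_packing G ->
  {in F & G, forall A B, #|A :&: B| <= 1} -> triple_packing (F :|: G).
Proof.
move=> [F3 pF] [G3 pG] FG; split=> [A | A B]; rewrite !inE.
  by case/orP; [apply: F3 | apply: G3].
case/orP=> [AF | AG] /orP[BF | BG] AB.
- exact: pF.
- exact: FG.
- by rewrite setIC; apply: FG.
- exact: pG.
Qed.

(* A triple meets itself in three points, so the two families are disjoint. *)
Lemma card_packingU F G : {in G, forall A, #|A| = 3} ->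
  {in F & G, forall A B, #|A :&: B| <= 1} -> #|F :|: G| = #|F| + #|G|.
Proof.
move=> G3 FG; rewrite cardsU (_ : F :&: G = set0) ?cards0 ?subn0 //.
apply/setP=> A; rewrite !inE; apply/negbTE/andP=> -[AF AG].
by have := FG _ _ AF AG; rewrite setIid G3.
Qed.

Lemma has_triple_packing1 : 2 < #|T| -> has_triple_packing 1.
Proof.
rewrite -cardsT => /card_gt2P[a [b [c [_ [ab bc ca]]]]].
exists [set [set a; b; c]]; last by rewrite cards1.
by apply/triple_packing1/cards3; rewrite // eq_sym.
Qed.

(* These replace {s} and the blocks containing {p, x, x'}, {q, x', y} and {p, y, z}. *)
Definition exchange_triples (s p x x' q y z : T) : {set {set T}} :=
  [set [set s; p; x]; [set s; q; x']; [set p; x'; y]; [set s; y; z]].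

Ltac card_setI_le1_by_cases :=
  apply: card_setI_le1 => ? ?; rewrite !inE;
  move=> /orP[/orP[]|]/eqP ? /orP[/orP[]|]/eqP ? /orP[/orP[]|]/eqP ? /orP[/orP[]|]/eqP ?;
  congruence.

Lemma triple_packing_exchange_triples (s p x x' q y z : T) : uniq [:: s; p; x; x'; q; y; z] ->
  triple_packing (exchange_triples s p x x' q y z) /\
  #|exchange_triples s p x x' q y z| = 4.
Proof.
rewrite /= !inE !negb_or => uniq7.
repeat match goal with H : is_true (_ && _) |- _ => case/andP: H => ? ? end.
repeat match goal with H : is_true (_ != _) |- _ => move/eqP: H => ? end.
have N3 a b c : a <> b -> a <> c -> b <> c -> #|[set a; b; c]| = 3.
  by move=> /eqP ab /eqP ac /eqP bc; apply: cards3.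
have N12 : #|[set s; p; x] :&: [set s; q; x']| <= 1 by card_setI_le1_by_cases.
have N13 : #|[set s; p; x] :&: [set p; x'; y]| <= 1 by card_setI_le1_by_cases.
have N14 : #|[set s; p; x] :&: [set s; y; z]| <= 1 by card_setI_le1_by_cases.
have N23 : #|[set s; q; x'] :&: [set p; x'; y]| <= 1 by card_setI_le1_by_cases.
have N24 : #|[set s; q; x'] :&: [set s; y; z]| <= 1 by card_setI_le1_by_cases.
have N34 : #|[set p; x'; y] :&: [set s; y; z]| <= 1 by card_setI_le1_by_cases.
split; first split.
- by move=> A; rewrite !inE => /orP[/orP[/orP[]|]|]/eqP->; apply: N3; congruence.
- move=> A B; rewrite !inE => /orP[/orP[/orP[]|]|]/eqP-> /orP[/orP[/orP[]|]|]/eqP->;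
  rewrite ?eqxx // => _; first [done | by rewrite setIC].
have neq A B : #|A| = 3 -> #|A :&: B| <= 1 -> A != B.
  by move=> A3 AB; apply: neq_card_setI_lt; rewrite A3; apply: leq_ltn_trans AB _.
by apply: cards4; apply: neq => //; apply: N3; congruence.
Qed.

End TriplePackings.

Section CodeSupports.
Variables (T : finType) (C : {set {set T}}).
Hypothesis C_le3 : {in C, forall A : {set T}, #|A| <= 3}.
Hypothesis C_dist : {in C &, forall A B : {set T}, A != B -> 4 <= set_dist A B}.

Lemma block_dist A B : A \in C -> B \in C -> A != B ->
  [/\ 4 + 2 * #|A :&: B| <= #|A| + #|B|, #|A| <= 3 & #|B| <= 3].
Proof.
move=> AC BC AB; have := C_dist AC BC AB; rewrite /set_dist.
have := subset_leq_card (subsetIl A B); have := subset_leq_card (subsetIr A B).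
by split; [lia | exact: C_le3 | exact: C_le3].
Qed.

Lemma triple_packing_triples : triple_packing [set A in C | #|A| == 3].
Proof.
split=> [A | A B]; first by rewrite inE => /andP[_ /eqP].
rewrite !inE => /andP[AC /eqP A3] /andP[BC /eqP B3] AB.
by have [] := block_dist AC BC AB; rewrite A3 B3; lia.
Qed.

Lemma set0_block : set0 \in C -> C = [set set0].
Proof.
move=> C0; apply/setP=> A; rewrite inE; apply/idP/eqP=> [AC | ->] //.
apply/eqP; apply: contraT => A0.
by have [] := block_dist AC C0 A0; rewrite cards0; lia.
Qed.

Lemma singleton_block s B : [set s] \in C -> B \in C -> B != [set s] ->
  #|B| = 3 /\ s \notin B.
Proof.
move=> sC BC Bs; have [] := block_dist BC sC Bs; rewrite cards1 => dist B3 _.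
split; first by have := subset_leq_card (subsetIl B [set s]); lia.
apply: contraTN dist => sB; rewrite -leqNgt (setIidPr _) ?cards1 ?sub1set //; lia.
Qed.

Lemma pair_block B D : B \in C -> #|B| = 2 -> D \in C -> B != D ->
  2 <= #|D| /\ [disjoint B & D].
Proof.
move=> BC B2 DC BD; have [] := block_dist BC DC BD; rewrite B2 -setI_eq0 -cards_eq0.
have := subset_leq_card (subsetIr B D); lia.
Qed.

End CodeSupports.

Section SingletonBlock.
Variables (T : finType) (C : {set {set T}}) (s : T).
Hypothesis C_le3 : {in C, forall A : {set T}, #|A| <= 3}.
Hypothesis C_dist : {in C &, forall A B : {set T}, A != B -> 4 <= set_dist A B}.
Hypothesis sC : [set s] \in C.

Let Tr := C :\ [set s].

Lemma nonsingleton_block B : B \in Tr -> [/\ B \in C, #|B| = 3 & s \notin B].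
Proof.
by rewrite in_setD1 => /andP[Bs BC]; have [] := singleton_block C_le3 C_dist sC BC Bs.
Qed.

Lemma triple_packing_nonsingleton : triple_packing Tr.
Proof.
apply: triple_packingS (triple_packing_triples C_le3 C_dist).
by apply/subsetP=> B /nonsingleton_block[BC B3 _]; rewrite inE BC B3 /=.
Qed.

Lemma card_nonsingleton : #|C| = #|Tr|.+1.
Proof. by rewrite (cardsD1 [set s] C) sC. Qed.

Lemma has_triple_packing_uncovered x y : x != y -> x != s -> y != s ->
  {in C, forall B : {set T}, ~~ ((x \in B) && (y \in B))} -> has_triple_packing T #|C|.
Proof.
move=> xy xs ys uncovered; set N := [set s; x; y].
have N3 : #|N| = 3 by apply: cards3; rewrite // eq_sym.
have cross : {in Tr & [set N], forall B A, #|B :&: A| <= 1}.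
  move=> B A BTr; rewrite inE => /eqP->; have [BC _ sB] := nonsingleton_block BTr.
  apply: card_setI_le1 => u v uB + vB; rewrite !inE.
  move=> /orP[/orP[]|]/eqP eu /orP[/orP[]|]/eqP ev; subst u v => //;
    first [by rewrite uB in sB | by rewrite vB in sB | by have := uncovered B BC; rewrite uB vB].
exists (Tr :|: [set N]).
  by apply: triple_packingU triple_packing_nonsingleton (triple_packing1 N3) cross.
rewrite card_packingU ?cards1 ?card_nonsingleton ?addn1 // => A.
by rewrite inE => /eqP->.
Qed.

Section Exchange.
Variables (p x x' q y z : T) (B1 B2 B3 : {set T}).
Hypothesis uniq7 : uniq [:: s; p; x; x'; q; y; z].
Hypotheses (B1C : B1 \in C) (B2C : B2 \in C) (B3C : B3 \in C).
Hypotheses (pB1 : p \in B1) (xB1 : x \in B1) (x'B1 : x' \in B1).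
Hypotheses (qB2 : q \in B2) (x'B2 : x' \in B2) (yB2 : y \in B2).
Hypotheses (pB3 : p \in B3) (yB3 : y \in B3) (zB3 : z \in B3).

Let Kept := C :\: [set [set s]; B1; B2; B3].
Let Added := exchange_triples s p x x' q y z.

Lemma exchange_blocks_nonsingleton : [/\ B1 \in Tr, B2 \in Tr & B3 \in Tr].
Proof.
have [sp sq] : s != p /\ s != q.
  by move: uniq7; rewrite /= !inE => /andP[/norP[-> /norP[_ /norP[_ /norP[-> _]]]] _].
rewrite !in_setD1 B1C B2C B3C !andbT.
by split; [move: pB1 sp | move: qB2 sq | move: pB3 sp] => uBi;
  apply: contraNneq => eBi; rewrite eBi inE eq_sym in uBi.
Qed.

(* Each pair of a new triple avoiding s lies in one of the removed blocks. *)
Lemma exchange_cross : {in Kept & Added, forall B N, #|B :&: N| <= 1}.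
Proof.
move=> B N; rewrite !inE !negb_or => /andP[/andP[/andP[/andP[Bs BB1] BB2] BB3] BC] N_added.
have BTr : B \in Tr by rewrite in_setD1 Bs.
have [_ _ sB] := nonsingleton_block BTr.
have in_block Bi u v : Bi \in Tr -> B != Bi ->
    u \in Bi -> v \in Bi -> u \in B -> v \in B -> u = v.
  move=> BiTr BBi uBi vBi uB vB; apply/eqP; apply: contraNT BBi => uv.
  by apply/eqP; apply: (packing_eq triple_packing_nonsingleton.2 BTr BiTr uv).
have [B1Tr B2Tr B3Tr] := exchange_blocks_nonsingleton.
have in1 := in_block B1 _ _ B1Tr BB1; have in2 := in_block B2 _ _ B2Tr BB2.
have in3 := in_block B3 _ _ B3Tr BB3.
move: N_added => /orP[/orP[/orP[]|]|]/eqP->; apply: card_setI_le1 => u v uB + vB;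
  rewrite !inE => /orP[/orP[]|]/eqP eu /orP[/orP[]|]/eqP ev; subst u v => //;
  first [ by rewrite uB in sB | by rewrite vB in sB
        | by apply: in1 | by apply: in2 | by apply: in3 ].
Qed.

Lemma has_triple_packing_exchange : has_triple_packing T #|C|.
Proof.
have [Added_packing Added4] := triple_packing_exchange_triples uniq7.
exists (Kept :|: Added).
  apply: triple_packingU Added_packing exchange_cross.
  apply: triple_packingS triple_packing_nonsingleton.
  by apply/subsetP=> B; rewrite !inE !negb_or => /andP[/andP[/andP[/andP[-> _] _] _] ->].
rewrite card_packingU ?Added4; [|exact: Added_packing.1 | exact: exchange_cross].
by rewrite (leq_trans (card_le_setD C [set [set s]; B1; B2; B3])) // leq_add2l card_set4_le.
Qed.

End Exchange.

Lemma has_triple_packing_covered : 2 < #|T| -> #|T| != 4 ->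
  (forall x y, x != y -> x != s -> y != s -> exists2 B, B \in C & (x \in B) && (y \in B)) ->
  has_triple_packing T #|C|.
Proof.
move=> T3 T4 covered.
have block_through u v : u != v -> u != s -> v != s ->
    exists B, [/\ B \in Tr, u \in B & v \in B].
  move=> uv us vs; have [B BC /andP[uB vB]] := covered u v uv us vs.
  exists B; split=> //; rewrite in_setD1 BC andbT.
  by apply: contraNneq us => eB; rewrite eB inE in uB.
have Tr_eq := packing_eq triple_packing_nonsingleton.2.
have [p [x [ps xs px]]] : exists p x, [/\ p != s, x != s & p != x].
  have : 1 < #|[set~ s]| by rewrite cardsC1; lia.
  by case/card_gt1P=> p [x [ps xs px]]; exists p, x; rewrite !inE in ps xs.
have [B1 [B1Tr pB1 xB1]] := block_through p x px ps xs.
have [B1C B1_3 sB1] := nonsingleton_block B1Tr.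
have [x' [x'B1 x'p x'x]] := third_point p x B1_3.
have [q] : exists q, q \notin s |: B1.
  have := max_card (s |: B1); rewrite cardsU1 sB1 B1_3 => T_ge4.
  by apply: exists_notin; rewrite cardsU1 sB1 B1_3; lia.
rewrite !inE negb_or => /andP[qs qB1].
have x's : x' != s by apply: contraNneq sB1 => <-.
have qx' : q != x' by apply: contraNneq qB1 => ->.
have [B2 [B2Tr qB2 x'B2]] := block_through q x' qx' qs x's.
have [B2C B2_3 sB2] := nonsingleton_block B2Tr.
have [y [yB2 yq yx']] := third_point q x' B2_3.
have yB1 : y \notin B1.
  by apply: contraNN qB1 => yB1; rewrite -(Tr_eq B2 B1 x' y) // eq_sym.
have ys : y != s by apply: contraNneq sB2 => <-.
have py : p != y by apply: contraNneq yB1 => <-.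
have [B3 [B3Tr pB3 yB3]] := block_through p y py ps ys.
have [B3C B3_3 sB3] := nonsingleton_block B3Tr.
have [z [zB3 zp zy]] := third_point p y B3_3.
have pB2 : p \notin B2.
  by apply: contraNN yB1 => pB2; rewrite (Tr_eq B1 B2 p x') // eq_sym.
have zB1 : z \notin B1.
  by apply: contraNN yB1 => zB1; rewrite (Tr_eq B1 B3 p z) // eq_sym.
have zB2 : z \notin B2.
  by apply: contraNN pB2 => zB2; rewrite (Tr_eq B2 B3 y z) // eq_sym.
apply: (@has_triple_packing_exchange p x x' q y z B1 B2 B3) => //.
distinct_by_membership.
Qed.

Lemma has_triple_packing_singleton : 2 < #|T| -> #|T| != 4 -> has_triple_packing T #|C|.
Proof.
move=> T3 T4.
case: (boolP [exists x, exists y, [&& x != y, x != s, y != s &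
                [forall B in C, ~~ ((x \in B) && (y \in B))]]]).
  case/existsP=> x /existsP[y /and4P[xy xs ys /forall_inP uncovered]].
  exact: has_triple_packing_uncovered xy xs ys uncovered.
move/existsPn=> covered; apply: has_triple_packing_covered => // x y xy xs ys.
move/existsPn/(_ y): (covered x); rewrite xy xs ys /= => /forall_inPn[B BC].
by rewrite negbK; exists B.
Qed.

End SingletonBlock.

Section PairBlock.
Variables (T : finType) (C : {set {set T}}) (A0 : {set T}).
Hypothesis C_le3 : {in C, forall A : {set T}, #|A| <= 3}.
Hypothesis C_dist : {in C &, forall A B : {set T}, A != B -> 4 <= set_dist A B}.
Hypotheses (A0C : A0 \in C) (A0_2 : #|A0| = 2).

Let P := [set B in C | #|B| == 2].
Let Tr := [set B in C | #|B| == 3].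

Lemma pair_disjoint B D : B \in P -> D \in C -> B != D -> [disjoint B & D].
Proof.
by rewrite inE => /andP[BC /eqP B2] DC BD; have [] := pair_block C_le3 C_dist BC B2 DC BD.
Qed.

Lemma pair_eq B D u : B \in P -> D \in P -> u \in B -> u \in D -> B = D.
Proof.
move=> BP DP uB uD; apply/eqP/negPn/negP => BD.
have DC : D \in C by move: DP; rewrite inE => /andP[].
by rewrite (disjointFr (pair_disjoint BP DC BD) uB) in uD.
Qed.

Lemma pair_triple_disjoint B D : B \in P -> D \in Tr -> [disjoint B & D].
Proof.
move=> BP; rewrite inE => /andP[DC /eqP D3]; apply: (pair_disjoint BP DC).
by move: (BP); rewrite inE => /andP[_]; apply: contraTneq => ->; rewrite D3.
Qed.

Lemma card_pairs_triples : #|C| = #|P| + #|Tr|.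
Proof.
have -> : C = P :|: Tr.
  apply/setP=> B; rewrite !inE; case BC: (B \in C) => //=.
  have := C_le3 BC; case: (eqVneq A0 B) => [<- | A0B]; first by rewrite A0_2.
  by have [] := pair_block C_le3 C_dist A0C A0_2 BC A0B; lia.
rewrite cardsU (_ : P :&: Tr = set0) ?cards0 ?subn0 //.
by apply/setP=> B; rewrite !inE; apply/negbTE/andP=> -[/andP[_ /eqP->] /andP[]].
Qed.

Section Extension.
Variables (Q : {set {set T}}) (c : T).
Hypotheses (QP : Q \subset P) (cQ : {in Q, forall B : {set T}, c \notin B}).

Let Im := [set c |: B | B in Q].

Lemma card_extension : #|Im| = #|Q|.
Proof.
apply: card_in_imset => B D BQ DQ eBD.
by rewrite -(setU1K (cQ BQ)) eBD setU1K // cQ.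
Qed.

Lemma triple_packing_extension : triple_packing Im.
Proof.
split=> [_ /imsetP[B BQ ->] | _ _ /imsetP[B BQ ->] /imsetP[D DQ ->] BD].
  by rewrite cardsU1 cQ //; move/subsetP: QP => /(_ B BQ); rewrite inE => /andP[_ /eqP->].
have {}BD : B != D by apply: contraNneq BD => ->.
have DC : D \in C by move/subsetP: QP => /(_ D DQ); rewrite inE => /andP[].
rewrite -setUIr (disjoint_setI0 (pair_disjoint (subsetP QP B BQ) DC BD)).
by rewrite setU0 cards1.
Qed.

Lemma extension_cross : {in Tr & Im, forall D A, #|D :&: A| <= 1}.
Proof.
move=> D _ DTr /imsetP[B BQ ->].
rewrite setIUr (setIC D B) (disjoint_setI0 (pair_triple_disjoint (subsetP QP B BQ) DTr)).
by rewrite setU0 -(cards1 c) subset_leq_card // subsetIr.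
Qed.

End Extension.

Lemma has_triple_packing_free_point c : {in P, forall B : {set T}, c \notin B} ->
  has_triple_packing T #|C|.
Proof.
move=> cP; have Im_packing := triple_packing_extension (subxx P) cP.
have cross := extension_cross (c := c) (subxx P).
exists (Tr :|: [set c |: B | B in P]).
  exact: triple_packingU (triple_packing_triples C_le3 C_dist) Im_packing cross.
by rewrite (card_packingU Im_packing.1 cross) (card_extension cP) card_pairs_triples addnC.
Qed.

Lemma triples_uncovered : (forall u, exists2 B, B \in P & u \in B) -> Tr = set0.
Proof.
move=> cover; apply/setP=> D; rewrite [RHS]inE; apply/negbTE/negP => DTr.
have [u uD] : exists u, u \in D.
  by apply/card_gt0P; move: DTr; rewrite inE => /andP[_ /eqP->].
have [B BP uB] := cover u.
by rewrite (disjointFr (pair_triple_disjoint BP DTr) uB) in uD.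
Qed.

(* The pairs then partition the points: add a to every pair but {a, b}, and
   replace {a, b} by a triple through b and points c, d of two other pairs. *)
Lemma has_triple_packing_partition : 2 < #|T| -> #|T| != 4 ->
  (forall u, exists2 B, B \in P & u \in B) -> has_triple_packing T #|C|.
Proof.
move=> T3 T4 cover.
have A0P : A0 \in P by rewrite inE A0C A0_2.
have /cards2P[a [b [ab eA0]]] : #|A0| == 2 by rewrite A0_2.
have aA0 : a \in A0 by rewrite eA0 !inE eqxx.
have bA0 : b \in A0 by rewrite eA0 !inE eqxx orbT.
have [c cA0] : exists c, c \notin A0 by apply: exists_notin; rewrite A0_2.
have [P2 P2P cP2] := cover c.
have A0P2_4 : #|A0 :|: P2| = 4.
  have A0P2 : A0 != P2 by apply: contraNneq cA0 => ->.
  move: (P2P); rewrite inE => /andP[P2C /eqP P2_2].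
  by rewrite cardsU (disjoint_setI0 (pair_disjoint A0P P2C A0P2)) cards0 A0_2 P2_2.
have [d] : exists d, d \notin A0 :|: P2.
  have := max_card (A0 :|: P2); rewrite A0P2_4 => T_ge4.
  by apply: exists_notin; rewrite A0P2_4; lia.
rewrite inE negb_or => /andP[dA0 dP2].
have [P3 P3P dP3] := cover d.
have P3P2 : P3 != P2 by apply: contraNneq dP2 => <-.
have aQ : {in P :\ A0, forall B : {set T}, a \notin B}.
  move=> B; rewrite in_setD1 => /andP[BA0 BP]; apply: contraNN BA0 => aB.
  by rewrite (pair_eq BP A0P aB aA0).
have N3 : #|[set b; c; d]| = 3 by apply: cards3; distinct_by_membership.
have aN : a \notin [set b; c; d] by distinct_by_membership.
have cross : {in [set a |: B | B in P :\ A0] & [set [set b; c; d]],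
               forall X Y, #|X :&: Y| <= 1}.
  move=> _ Y /imsetP[B BQ ->]; rewrite inE => /eqP->.
  move: BQ; rewrite in_setD1 => /andP[BA0 BP].
  have in_B w : w \in a |: B -> w \in [set b; c; d] -> w \in B.
    by rewrite in_setU1 => /orP[/eqP-> | //] aN'; rewrite aN' in aN.
  apply: card_setI_le1 => u v uX uN vX vN.
  move: (in_B u uX uN) (in_B v vX vN) => uB vB {uX vX}.
  move: uN vN; rewrite !inE => /orP[/orP[]|]/eqP eu /orP[/orP[]|]/eqP ev; subst u v => //;
  first [ by rewrite (pair_eq BP A0P uB bA0) eqxx in BA0
        | by rewrite (pair_eq BP A0P vB bA0) eqxx in BA0
        | by rewrite -(pair_eq BP P2P uB cP2) (pair_eq BP P3P vB dP3) eqxx in P3P2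
        | by rewrite -(pair_eq BP P2P vB cP2) (pair_eq BP P3P uB dP3) eqxx in P3P2 ].
have Im_packing := triple_packing_extension (subsetDl P [set A0]) aQ.
exists ([set a |: B | B in P :\ A0] :|: [set [set b; c; d]]).
  exact: triple_packingU Im_packing (triple_packing1 N3) cross.
rewrite (card_packingU (triple_packing1 N3).1 cross) (card_extension aQ) cards1.
by rewrite card_pairs_triples (triples_uncovered cover) cards0 addn0 (cardsD1 A0 P) A0P addnC.
Qed.

Lemma has_triple_packing_pair : 2 < #|T| -> #|T| != 4 -> has_triple_packing T #|C|.
Proof.
move=> T3 T4; case: (boolP [exists c, [forall B in P, c \notin B]]).
  by case/existsP=> c /forall_inP; apply: has_triple_packing_free_point.
move/existsPn=> covered; apply: has_triple_packing_partition => // u.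
by have /forall_inPn[B BP] := covered u; rewrite negbK; exists B.
Qed.

End PairBlock.

Lemma has_triple_packing_code (T : finType) (C : {set {set T}}) :
  {in C, forall A : {set T}, #|A| <= 3} ->
  {in C &, forall A B : {set T}, A != B -> 4 <= set_dist A B} ->
  2 < #|T| -> #|T| != 4 -> has_triple_packing T #|C|.
Proof.
move=> C_le3 C_dist T3 T4.
case: (boolP [exists A in C, #|A| < 3]) => [/exists_inP[A AC] | /exists_inPn C_ge3].
  case A_size : #|A| => [|[|[|k]]] // _.
  - move/eqP: A_size; rewrite cards_eq0 => /eqP A0; rewrite A0 in AC.
    by rewrite (set0_block C_le3 C_dist AC) cards1; apply: has_triple_packing1.
  - have /cards1P[s As] : #|A| == 1 by rewrite A_size.
    by rewrite As in AC; apply: has_triple_packing_singleton AC T3 T4.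
  - exact: has_triple_packing_pair C_le3 C_dist AC A_size T3 T4.
exists C => //; apply: triple_packingS (triple_packing_triples C_le3 C_dist).
by apply/subsetP=> A A_in; rewrite inE A_in eqn_leq C_le3 //= leqNgt C_ge3.
Qed.

Definition supp n (u : word n) : {set 'I_n} := [set i | u i].
Definition indic n (A : {set 'I_n}) : word n := [ffun i => i \in A].

Lemma indicK n : cancel (@indic n) (@supp n).
Proof. by move=> A; apply/setP=> i; rewrite inE ffunE. Qed.

Lemma suppK n : cancel (@supp n) (@indic n).
Proof. by move=> u; apply/ffunP=> i; rewrite ffunE inE. Qed.

Lemma wt_indic n (A : {set 'I_n}) : wt (indic A) = #|A|.
Proof. exact: (congr1 (fun B : {set 'I_n} => #|B|) (indicK A)). Qed.

Lemma hdist_supp n (u v : word n) : hdist u v = set_dist (supp u) (supp v).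
Proof.
rewrite /hdist /set_dist.
have -> : [set i | u i != v i] = (supp u :\: supp v) :|: (supp v :\: supp u).
  by apply/setP=> i; rewrite !inE; case: (u i); case: (v i).
rewrite cardsU (_ : _ :&: _ = set0) ?cards0 ?subn0.
  rewrite !cardsD (setIC (supp v)).
  have := subset_leq_card (subsetIl (supp u) (supp v)).
  have := subset_leq_card (subsetIr (supp u) (supp v)).
  move: #|supp u :&: supp v| #|supp u| #|supp v| => k a b; lia.
by apply/setP=> i; rewrite !inE; case: (u i); case: (v i).
Qed.

Lemma hdist_indic n (A B : {set 'I_n}) : hdist (indic A) (indic B) = set_dist A B.
Proof. by rewrite hdist_supp !indicK. Qed.

Lemma hdist_le n (u v : word n) : hdist u v <= n.
Proof. by rewrite /hdist -[X in _ <= X]card_ord max_card. Qed.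

Lemma hdist_sum3 n (u v w : word n) : hdist u v + hdist v w + hdist u w <= 2 * n.
Proof.
have card_sum (P : pred 'I_n) : #|[set i | P i]| = \sum_i P i.
  by rewrite -sum1_card big_mkcond /=; apply: eq_bigr => i _; rewrite inE; case: (P i).
rewrite /hdist !card_sum -!big_split /= -[X in _ <= 2 * X]card_ord -sum1_card.
by rewrite big_distrr /=; apply: leq_sum => i _; case: (u i); case: (v i); case: (w i).
Qed.

Lemma min_dist_geP n d (S : {set word n}) :
  reflect {in S &, forall u v, u != v -> d <= hdist u v} (min_dist_ge d S).
Proof.
apply: (iffP forall_inP) => Sd.
  by move=> u v uS vS; move: (Sd u uS) => /forall_inP /(_ v vS) /implyP.
by move=> u uS; apply/forall_inP=> v vS; apply/implyP; apply: Sd.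
Qed.

Lemma Aprime_ge n d e (S : {set word n}) : S != set0 ->
  {in S, forall u, wt u <= e} -> min_dist_ge d S -> #|S| <= Aprime n d e.
Proof. by move=> S0 Se Sd; apply: leq_bigmax_cond; rewrite S0 Sd andbT; apply/forall_inP. Qed.

Lemma Acw_ge n d e (S : {set word n}) :
  {in S, forall u, wt u = e} -> min_dist_ge d S -> #|S| <= Acw n d e.
Proof.
by move=> Se Sd; apply: leq_bigmax_cond; rewrite Sd andbT; apply/forall_inP=> u /Se->.
Qed.

Lemma Acw_le_Aprime n d e : Acw n d e <= Aprime n d e.
Proof.
apply/bigmax_leqP=> S /andP[/forall_inP Se Sd].
have [-> | S0] := eqVneq S set0; first by rewrite cards0.
by apply: Aprime_ge => // u /Se/eqP->.
Qed.

Lemma Aprime_lt n d e : n < d -> Aprime n d e = 1.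
Proof.
move=> nd; apply/eqP; rewrite eqn_leq; apply/andP; split.
  apply/bigmax_leqP=> S /andP[_ /min_dist_geP Sd]; apply/card_le1_eqP=> u v uS vS.
  apply/eqP/negPn/negP=> vu; have := Sd v u vS uS vu; have := hdist_le v u; lia.
rewrite -(cards1 (indic (set0 : {set 'I_n}))); apply: Aprime_ge.
- by apply/set0Pn; exists (indic set0); rewrite inE.
- by move=> u; rewrite inE => /eqP->; rewrite wt_indic cards0.
- by apply/min_dist_geP=> u v; rewrite !inE => /eqP-> /eqP->; rewrite eqxx.
Qed.

Lemma Aprime_le2 n d e : 2 * n < 3 * d -> Aprime n d e <= 2.
Proof.
move=> nd; apply/bigmax_leqP=> S /andP[_ /min_dist_geP Sd]; rewrite leqNgt.
apply/negP=> /card_gt2P[u [v [w [[uS vS wS] [uv vw wu]]]]].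
have := Sd _ _ uS vS uv; have := Sd _ _ vS wS vw.
have := Sd _ _ uS wS; rewrite eq_sym => /(_ wu).
have := hdist_sum3 u v w; lia.
Qed.

Lemma Aprime_4_4_3 : Aprime 4 4 3 = 2.
Proof.
apply/eqP; rewrite eqn_leq Aprime_le2 //=.
pose A : {set 'I_4} := [set inord 0; inord 1].
pose B : {set 'I_4} := [set inord 2; inord 3].
have A2 : #|A| = 2.
  by rewrite cards2 (_ : inord 0 != inord 1) //; apply/eqP => /(congr1 val); rewrite /= !inordK.
have B2 : #|B| = 2.
  by rewrite cards2 (_ : inord 2 != inord 3) //; apply/eqP => /(congr1 val); rewrite /= !inordK.
have AB0 : A :&: B = set0.
  apply/setP=> i; rewrite !inE; apply/negbTE/andP => -[].
  by move=> /orP[]/eqP-> /orP[]/eqP/(congr1 val); rewrite /= !inordK.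
have AB : A != B by apply: neq_card_setI_lt; rewrite AB0 cards0 A2.
apply: (@leq_trans #|[set indic A; indic B]|).
  by rewrite cards2 (inj_eq (can_inj (@indicK 4))) AB.
apply: Aprime_ge.
- by apply/set0Pn; exists (indic A); rewrite !inE eqxx.
- by move=> u; rewrite !inE => /orP[]/eqP->; rewrite wt_indic ?A2 ?B2.
apply/min_dist_geP=> u v; rewrite !inE => /orP[]/eqP-> /orP[]/eqP->; rewrite ?eqxx // => _;
  by rewrite hdist_indic /set_dist ?AB0 1?setIC ?AB0 cards0 A2 B2.
Qed.

Lemma Acw_ge_triple_packing n m : has_triple_packing 'I_n m -> m <= Acw n 4 3.
Proof.
case=> F [F3 Fp] mF; apply: leq_trans mF _.
rewrite -(card_imset _ (can_inj (@indicK n))); apply: Acw_ge.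
  by move=> _ /imsetP[A AF ->]; rewrite wt_indic F3.
apply/min_dist_geP=> _ _ /imsetP[A AF ->] /imsetP[B BF ->] AB.
have {}AB : A != B by apply: contraNneq AB => ->.
rewrite hdist_indic /set_dist (F3 A AF) (F3 B BF).
by have := Fp _ _ AF BF AB; lia.
Qed.

Lemma Aprime_le_Acw n : 2 < n -> n != 4 -> Aprime n 4 3 <= Acw n 4 3.
Proof.
move=> n3 n4; apply/bigmax_leqP=> S /andP[/andP[_ /forall_inP Swt] /min_dist_geP Sd].
rewrite -(card_imset _ (can_inj (@suppK n))); apply: Acw_ge_triple_packing.
apply: has_triple_packing_code; rewrite ?card_ord //.
  by move=> _ /imsetP[u uS ->]; apply: Swt.
move=> _ _ /imsetP[u uS ->] /imsetP[v vS ->] uv; rewrite -hdist_supp.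
by apply: Sd => //; apply: contraNneq uv => ->.
Qed.

Theorem corollary2 :
  (forall n : nat, 0 < n -> n \notin [:: 1; 2; 4] -> Aprime n 4 3 = Acw n 4 3) /\
  Aprime 1 4 3 = 1 /\ Aprime 2 4 3 = 1 /\ Aprime 4 4 3 = 2.
Proof.
split; last split; last split.
- move=> n n0; rewrite !inE => /norP[n1 /norP[n2 n4]].
  have n3 : 2 < n by lia.
  by apply/eqP; rewrite eqn_leq Acw_le_Aprime Aprime_le_Acw.
- exact: Aprime_lt.
- exact: Aprime_lt.
- exact: Aprime_4_4_3.
Qed.
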